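(* Consider feature importance schemes, i.e. rules $I$ that assign to every finite feature set $F$ and every evaluation function $\nu$ on $F$ a function $I_\nu : F \to \mathbb{R}_{\ge 0}$. Consider the following three properties of a scheme $I$: 1. (Marginal contribution) For every $F$, every evaluation function $\nu$ on $F$ and every $f\in F$: $I_\nu(f) \ge \nu(F) - \nu(F\setminus\{f\})$. 2. (Elimination) For every $F$, every evaluation function $\nu$ on $F$, every $T\subseteq F$, and every $f \in F\setminus T$: $I_\nu(f) \ge I_{\nu'}(f)$, where $(F',\nu')$ is the result of eliminating $T$ from $(F,\nu)$. 3. (Minimalism) For every scheme $J$ satisfying properties 1 and 2, and for every $F$, every evaluation function $\nu$ on $F$ and every $f\in F$: $I_\nu(f) \le J_\nu(f)$. Then the scheme $$I_\nu(f) = \max_{S \subseteq F} \Delta(f,S,\nu)$$ satisfies properties 1, 2 and 3, and it is the only scheme satisfying all three properties.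
   Context: A feature set $F$ is a finite set. An evaluation function on $F$ is a function $\nu : 2^F \to \mathbb{R}_{\ge 0}$ assigning a value to each subset of $F$, with $\nu(\emptyset)=0$. For $f\in F$ and $S\subseteq F$, the marginal gain is $\Delta(f,S,\nu) = \nu(S\cup\{f\}) - \nu(S)$. Eliminating a set $T\subseteq F$ from $(F,\nu)$ produces the feature set $F' = F\setminus T$ and the evaluation function $\nu'$ on $F'$ defined by $\nu'(S) = \nu(S)$ for all $S\subseteq F'$. The function $I_\nu(f)=\max_{S\subseteq F}\Delta(f,S,\nu)$ is called the Marginal Contribution Feature Importance (MCI). *)

From mathcomp Require Import all_boot all_order all_algebra.
Unset Printing Implicit Defensive.
Import Order.TTheory GRing.Theory Num.Theory.
Local Open Scope ring_scope.

Section MCI.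
Variable R : realFieldType.

(* A finite feature set F is modelled as a finite type T (F = all of T);
   an evaluation function is a map on subsets {set T} -> R that is
   nonnegative and vanishes on the empty set. *)
Definition is_eval (T : finType) (nu : {set T} -> R) : Prop :=
  nu set0 = 0 /\ forall S : {set T}, 0 <= nu S.

Definition Delta (T : finType) (f : T) (S : {set T}) (nu : {set T} -> R) : R :=
  nu (f |: S) - nu S.

Definition Scheme := forall T : finType, ({set T} -> R) -> T -> R.

Definition is_scheme (I : Scheme) : Prop :=
  forall (T : finType) (nu : {set T} -> R), is_eval T nu ->
    forall f : T, 0 <= I T nu f.

Definition elim_set (T : finType) (A : {set T}) : finType :=
  {x : T | x \notin A}.

Definition elim_eval (T : finType) (A : {set T}) (nu : {set T} -> R)
  : {set elim_set T A} -> R :=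
  fun S => nu [set val x | x in S].

Definition marginal_prop (I : Scheme) : Prop :=
  forall (T : finType) (nu : {set T} -> R), is_eval T nu ->
    forall f : T, nu [set: T] - nu ([set: T] :\ f) <= I T nu f.

Definition elimination_prop (I : Scheme) : Prop :=
  forall (T : finType) (nu : {set T} -> R), is_eval T nu ->
    forall (A : {set T}) (f : elim_set T A),
      I (elim_set T A) (@elim_eval T A nu) f <= I T nu (val f).

Definition minimal_prop (I : Scheme) : Prop :=
  forall J : Scheme, is_scheme J -> marginal_prop J -> elimination_prop J ->
    forall (T : finType) (nu : {set T} -> R), is_eval T nu ->
      forall f : T, I T nu f <= J T nu f.

(* Marginal Contribution Feature Importance: max over S of Delta(f,S,nu).
   (The fold starts from 0; this is harmless since Delta(f,S,nu) = 0 for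
   any S containing f, so the maximum is >= 0 anyway.) *)
Definition MCI : Scheme :=
  fun T nu f => \big[Num.max/0]_(S : {set T}) Delta T f S nu.

End MCI.

From mathcomp Require Import all_boot all_order all_algebra.
Import Order.TTheory GRing.Theory Num.Theory.
Set Implicit Arguments.
Unset Strict Implicit.
Local Open Scope ring_scope.

(* Properties 1 and 2 for MCI are
   direct: the full-set marginal contribution is the gain at S = F \ {f},
   and every gain in an eliminated game F' = F \ A is a gain in the
   original game, since nu' S = nu S.  Let J satisfy properties 1
   and 2 and fix S.  If f is in S the gain is 0 <= J.  Otherwise eliminate
   A = complement of (S + {f}): in the resulting game the full-set marginal
   contribution of f is exactly Delta f S nu, so property 1 for the
   eliminated game and property 2 give Delta f S nu <= J T nu f; hence
   MCI <= J.  Uniqueness follows by antisymmetry: a minimal J is below MCI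
   (which satisfies 1 and 2), and MCI is below any J satisfying 1 and 2.
   The file first collects facts on 0-started maxima, then on elimination,
   then the four properties of MCI, and finally the theorem. *)

Section BigMax0.
Variable R : realDomainType.

Lemma bigmax0_ge0 (I : finType) (F : I -> R) : 0 <= \big[Num.max/0]_(i : I) F i.
Proof. by elim/big_rec: _ => // i x _ x_ge0; rewrite le_max x_ge0 orbT. Qed.

Lemma bigmax0_ge (I : finType) (F : I -> R) (j : I) :
  F j <= \big[Num.max/0]_(i : I) F i.
Proof. by rewrite (bigD1 j) //= le_max lexx. Qed.

Lemma bigmax0_le (I : finType) (F : I -> R) (c : R) :
  0 <= c -> (forall i, F i <= c) -> \big[Num.max/0]_(i : I) F i <= c.
Proof. by move=> c_ge0 F_le; elim/big_rec: _ => // i x _ x_le; rewrite ge_max F_le. Qed.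

End BigMax0.

Section Elimination.
Variables (T : finType) (A : {set T}).

Lemma val_imset_setT : [set val x | x in [set: elim_set T A]] = ~: A.
Proof.
apply/setP=> x; rewrite inE; apply/imsetP/idP => [[y _ ->]|xA].
  exact: (valP y).
by exists (exist _ x xA : elim_set T A).
Qed.

Lemma val_imset_setTD1 (y : elim_set T A) :
  [set val x | x in [set: elim_set T A] :\ y] = ~: A :\ val y.
Proof.
apply/setP=> x; rewrite !inE; apply/imsetP/andP => [[z]|[x_y xA]].
  rewrite !inE andbT => z_y ->; split; last exact: (valP z).
  by apply: contra z_y => /eqP/val_inj ->.
exists (exist _ x xA : elim_set T A) => //.
by rewrite !inE andbT; apply: contra x_y => /eqP <-.
Qed.

Variable R : realFieldType.

Lemma elim_eval_is_eval (nu : {set T} -> R) :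
  is_eval R T nu -> is_eval R (elim_set T A) (elim_eval R T A nu).
Proof. by case=> nu0 nu_ge0; split; rewrite /elim_eval ?imset0. Qed.

Lemma Delta_elim (nu : {set T} -> R) (f : elim_set T A) (S : {set elim_set T A}) :
  Delta R _ f S (elim_eval R T A nu) = Delta R T (val f) [set val x | x in S] nu.
Proof. by rewrite /Delta /elim_eval imsetU1. Qed.

End Elimination.

Section MarginalGain.
Variables (R : realFieldType) (T : finType).

Lemma Delta_mem (nu : {set T} -> R) (f : T) (S : {set T}) :
  f \in S -> Delta R T f S nu = 0.
Proof. by move=> fS; rewrite /Delta (setUidPr _) ?sub1set // subrr. Qed.

Lemma survives_elim (f : T) (S : {set T}) : f \notin ~: (f |: S).
Proof. by rewrite !inE negbK eqxx. Qed.

Lemma Delta_as_elim_marginal (nu : {set T} -> R) (f : T) (S : {set T}) :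
  f \notin S ->
  let nu' := elim_eval R T (~: (f |: S)) nu in
  let f' := exist _ f (survives_elim f S) : elim_set T (~: (f |: S)) in
  Delta R T f S nu = nu' [set: _] - nu' ([set: _] :\ f').
Proof.
by move=> fS /=; rewrite /elim_eval val_imset_setT val_imset_setTD1 /= setCK setU1K.
Qed.

End MarginalGain.

Section MCIProperties.
Variable R : realFieldType.

Lemma MCI_is_scheme : is_scheme R (MCI R).
Proof. by move=> T nu _ f; apply: bigmax0_ge0. Qed.

Lemma MCI_marginal : marginal_prop R (MCI R).
Proof.
move=> T nu _ f; apply: (le_trans _ (bigmax0_ge _ (setT :\ f))).
by rewrite /Delta setD1K ?inE.
Qed.

Lemma MCI_elimination : elimination_prop R (MCI R).
Proof.
move=> T nu _ A f; apply: bigmax0_le; first exact: bigmax0_ge0.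
by move=> S; rewrite Delta_elim; apply: bigmax0_ge.
Qed.

Lemma MCI_le_scheme (J : Scheme R) :
  is_scheme R J -> marginal_prop R J -> elimination_prop R J ->
  forall (T : finType) (nu : {set T} -> R), is_eval R T nu ->
    forall f : T, MCI R T nu f <= J T nu f.
Proof.
move=> J_ge0 J_marg J_elim T nu nu_eval f.
apply: bigmax0_le => [|S]; first exact: J_ge0.
have [fS|fS] := boolP (f \in S); first by rewrite Delta_mem ?J_ge0.
rewrite (Delta_as_elim_marginal nu fS) /=.
apply: (le_trans _ (J_elim _ _ nu_eval _ (exist _ f (survives_elim f S)))).
exact/J_marg/elim_eval_is_eval.
Qed.

Lemma MCI_minimal : minimal_prop R (MCI R).
Proof. exact: MCI_le_scheme. Qed.

End MCIProperties.

Theorem theorem1 (R : realFieldType) :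
  [/\ is_scheme R (MCI R), marginal_prop R (MCI R), elimination_prop R (MCI R),
      minimal_prop R (MCI R) &
      forall J : Scheme R,
        is_scheme R J -> marginal_prop R J -> elimination_prop R J -> minimal_prop R J ->
        forall (T : finType) (nu : {set T} -> R), is_eval R T nu ->
          forall f : T, J T nu f = MCI R T nu f].
Proof.
split; [exact: MCI_is_scheme | exact: MCI_marginal | exact: MCI_elimination
       | exact: MCI_minimal | ].
move=> J J_ge0 J_marg J_elim J_min T nu nu_eval f.
apply: le_anti; rewrite MCI_le_scheme // andbT.
by apply: J_min => //; [exact: MCI_is_scheme | exact: MCI_marginal | exact: MCI_elimination].
Qed.
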